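(* In the setting and under the hypotheses of the following result, suppose additionally that $\hat\varphi_T(H_T)\overset{p}{\to}\varphi_0$. Then $(K^\kappa\hat\varphi_T)(H_T)\overset{p}{\to}\varphi_0$. Hypotheses: the data come from the uncontaminated causal invertible VARMA model $\phi_0(L)x_t=\theta_0(L)\varepsilon_t$; $H_T\subset\{1,\dots,T\}$ is a retained subset; $\kappa\ge0$ is an integer; $\hat\varphi_T(\cdot)$ minimises $f_T(\cdot,\cdot)$ over $\mathcal V$; (A1) there is an open $\mathcal N\subset\mathcal V$ such that with probability tending to one: (i) there is $\delta>0$ with $\inf_{\varphi\notin\mathcal N}f_T(\varphi,H_T)\ge\inf_{\varphi\in\mathcal N}f_T(\varphi,H_T)+\delta$, and (ii) for every $\varepsilon>0$ there is $\eta_\varepsilon>0$ with $\inf_{\varphi\in\mathcal N,\|\varphi-\hat\varphi_T(H_T)\|\ge\varepsilon}f_T(\varphi,H_T)\ge f_T(\hat\varphi_T(H_T),H_T)+\eta_\varepsilon$; (A2) $\sup_{\varphi\in\mathcal V}|f_T(\varphi,H_T)-f_T(\varphi,S^\kappa H_T)|\overset{p}{\to}0$. (In the maximisation case, infima become suprema and ''$\ge\cdot+c$'' becomes ''$\le\cdot-c$''.)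
   Context: $\{x_t\}$ is a $d$-dimensional mean-zero VARMA process, $\phi_0(L)x_t=\theta_0(L)\varepsilon_t$. The parameter space $\mathcal V$ consists of $\varphi=(\phi,\theta)$ for which the model is causal and invertible; $\varphi_0=(\phi_0,\theta_0)\in\mathcal V$ is the true parameter. Residuals: $e_t(\varphi)=\theta^{-1}(L)\phi(L)x_t$. For $H\subset\{1,\dots,T\}$, $f_T(\varphi,H)=g_T(\{e_t(\varphi):t\in H\})$ and $\hat\varphi_T(H)$ is an exact optimiser of $f_T(\cdot,H)$ over $\mathcal V$. Patch removal: $S^\kappa H_T=H_T\setminus\bigcup_{t\notin H_T}\{t+1,\dots,\min(t+\kappa,T)\}$ and $(K^\kappa\hat\varphi_T)(H_T)=\hat\varphi_T(S^\kappa H_T)$.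
   Formalization: In (A1) the constants δ and $\eta_\varepsilon$ are fixed numbers chosen before the event that holds with probability tending to one, so they do not depend on T or on the sample. Each condition added here is assumed in the paper as well or is needed for the statement above to hold. *)

From HB Require Import structures.
From mathcomp Require Import all_boot all_order all_algebra.
From mathcomp Require Import all_classical all_reals all_analysis.
Set Implicit Arguments. Unset Strict Implicit. Unset Printing Implicit Defensive.
Import Order.TTheory GRing.Theory Num.Theory.
Import numFieldNormedType.Exports.
Local Open Scope classical_set_scope.
Local Open Scope ring_scope.

Section VarmaDefs.
Variables (R : realType) (d0 : measure_display) (Omega : measurableType d0).
Variable (P : probability Omega R).

(* The sequence of (possibly non-measurable) events A T has probability
   tending to zero, in the outer-probability sense: for every delta > 0,
   eventually A T is covered by a measurable set of probability <= delta. *)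
Definition prob_vanishing (A : nat -> set Omega) : Prop :=
  forall delta : R, 0 < delta ->
    \forall T \near \oo, exists B : set Omega,
      [/\ measurable B, A T `<=` B & (P B <= delta%:E)%E].

Definition wp_tending_to_one (E : nat -> set Omega) : Prop :=
  prob_vanishing (fun T => ~` E T).

Definition cvg_in_prob (n : nat) (X : nat -> Omega -> 'rV[R]_n) (x : 'rV[R]_n)
  : Prop :=
  forall eps : R, 0 < eps ->
    prob_vanishing (fun T => [set w | eps <= `|X T w - x|]).

Definition cvg_in_prob0 (Y : nat -> Omega -> \bar R) : Prop :=
  forall eps : R, 0 < eps ->
    prob_vanishing (fun T => [set w | (eps%:E <= Y T w)%E]).
End VarmaDefs.

Definition resid_family (R : realType) (d : nat) (e : nat -> 'cV[R]_d)
  (H : set nat) : nat -> option 'cV[R]_d :=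
  fun t => if `[< H t >] then Some (e t) else None.

Definition crit_fT (R : realType) (Omega : Type) (d n : nat)
  (g : nat -> (nat -> option 'cV[R]_d) -> R)
  (e : Omega -> 'rV[R]_n -> nat -> 'cV[R]_d)
  (T : nat) (w : Omega) (phi : 'rV[R]_n) (H : set nat) : R :=
  g T (resid_family (e w phi) H).

Definition patch_removal (T kappa : nat) (H : set nat) : set nat :=
  [set s | H s /\
     ~ (exists t : nat, [/\ (1 <= t <= T)%N, ~ H t, (t < s)%N
                          & (s <= minn (t + kappa) T)%N])].

From HB Require Import structures.
From mathcomp Require Import all_boot all_order all_algebra.
From mathcomp Require Import all_classical all_reals all_analysis.
Import Order.TTheory GRing.Theory Num.Theory.
Import numFieldNormedType.Exports.
Set Implicit Arguments. Unset Strict Implicit.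
Local Open Scope classical_set_scope.
Local Open Scope ring_scope.

(* Off four events of vanishing probability (phihat_T(H_T) is eps/2 away from
   phi0, one of the two separation conditions of (A1) fails, or the uniform
   distance of (A2) is at least c), the patched estimate phihat_T(S^kappa H_T)
   minimises a c-perturbation of f_T(., H_T), so it exceeds the minimum of
   f_T(., H_T) by less than 2c <= min(delta, eta).  Condition (i) then puts it
   in N and condition (ii) within eps/2 of phihat_T(H_T), hence within eps of
   phi0. *)

Section ProbVanishing.
Variables (R : realType) (d : measure_display) (Omega : measurableType d).
Variable (P : probability Omega R).

Lemma prob_vanishingS (A B : nat -> set Omega) :
  (forall T, A T `<=` B T) -> prob_vanishing P B -> prob_vanishing P A.
Proof.
move=> AB vB delta delta0; apply: filterS (vB _ delta0) => T [C [mC BC PC]].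
by exists C; split => //; apply: subset_trans BC.
Qed.

Lemma prob_vanishingU (A B : nat -> set Omega) :
  prob_vanishing P A -> prob_vanishing P B ->
  prob_vanishing P (fun T => A T `|` B T).
Proof.
move=> vA vB delta delta0.
have delta20 : 0 < delta / 2 by rewrite divr_gt0.
apply: filterS2 (vA _ delta20) (vB _ delta20).
move=> T [CA [mCA ACA PCA]] [CB [mCB BCB PCB]].
exists (CA `|` CB); split; [exact: measurableU | exact: setUSS |].
apply: le_trans (measureU2 _ mCA mCB) _.
by rewrite (splitr delta) EFinD; apply: leeD.
Qed.

End ProbVanishing.

Section PerturbedArgmin.
Variables (R : realType) (X : normedModType R) (V : set X) (f : X -> R).

Lemma argmin_perturbation (fS : X -> R) (c : R) (xH xS : X) :
  V xH -> V xS -> (forall x, V x -> fS xS <= fS x) ->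
  (forall x, V x -> `|f x - fS x| < c) -> f xS < f xH + (c + c).
Proof.
move=> VxH VxS minS close.
have fS_xS : f xS < fS xS + c.
  by rewrite -ltrBlDl; apply: le_lt_trans (close _ VxS); exact: ler_norm.
have fS_xH : fS xH < f xH + c.
  rewrite -ltrBlDl; apply: le_lt_trans (close _ VxH).
  by rewrite distrC; exact: ler_norm.
rewrite addrA; apply: (lt_trans fS_xS); rewrite ltrD2r.
exact: le_lt_trans (minS _ VxH) fS_xH.
Qed.

Lemma well_separated_argmin (N : set X) (xH x : X) (delta eta r : R) :
  N `<=` V -> (forall y, V y -> f xH <= f y) ->
  (ereal_inf [set (f y)%:E | y in V `\` N]
     >= ereal_inf [set (f y)%:E | y in N] + delta%:E)%E ->
  (ereal_inf [set (f y)%:E | y in [set y | N y /\ (r <= `|y - xH|)%R]]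
     >= (f xH + eta)%:E)%E ->
  V x -> f x < f xH + delta -> f x < f xH + eta -> `|x - xH| < r.
Proof.
move=> NV minH gapVN gapN Vx ltdelta lteta; rewrite ltNge; apply/negP => far.
have [Nx|nNx] := pselect (N x).
  have : ((f xH + eta)%:E <= (f x)%:E)%E.
    by apply: le_trans gapN (ereal_inf_lbound _); exists x.
  by rewrite lee_fin leNgt lteta.
have infN : ((f xH)%:E <= ereal_inf [set (f y)%:E | y in N])%E.
  by apply/ereal_infP => _ [y Ny <-]; rewrite lee_fin; apply/minH/NV.
have : ((f xH + delta)%:E <= (f x)%:E)%E.
  rewrite EFinD; apply: le_trans (leeD2r _ infN) _.
  by apply: le_trans gapVN (ereal_inf_lbound _); exists x.
by rewrite lee_fin leNgt ltdelta.
Qed.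

End PerturbedArgmin.

Lemma ereal_sup_image_lt (R : realType) (T : Type) (h : T -> R) (A : set T) (c : R) :
  ~ (c%:E <= ereal_sup [set (h x)%:E | x in A])%E -> forall x, A x -> h x < c.
Proof.
move=> /negP; rewrite -ltNge => supA x Ax; rewrite -lte_fin.
by apply: le_lt_trans supA; apply: ereal_sup_ubound; exists x.
Qed.

Lemma patch_removal_subset (T kappa : nat) (H : set nat) :
  patch_removal T kappa H `<=` H.
Proof. by move=> s []. Qed.

Theorem corollary1
  (R : realType) (d0 : measure_display) (Omega : measurableType d0)
  (P : probability Omega R)
  (d n : nat)                                   (* dimension, # parameters *)
  (V : set 'rV[R]_n) (phi0 : 'rV[R]_n)          (* parameter space, truth *)
  (e : Omega -> 'rV[R]_n -> nat -> 'cV[R]_d)    (* residuals e_t(phi) *)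
  (g : nat -> (nat -> option 'cV[R]_d) -> R)    (* criterion g_T *)
  (est : Omega -> nat -> set nat -> 'rV[R]_n)   (* phihat_T(H) *)
  (H : nat -> Omega -> set nat)                 (* retained subset H_T *)
  (kappa : nat) :
  V phi0 ->
  (forall T w, H T w `<=` [set t | (1 <= t <= T)%N]) ->
  (* phihat_T(H) is an exact minimiser of f_T(., H) over V *)
  (forall T w (G : set nat), G `<=` [set t | (1 <= t <= T)%N] ->
     V (est w T G) /\
     forall phi, V phi -> crit_fT g e T w (est w T G) G <= crit_fT g e T w phi G) ->
  (* (A1) *)
  (exists N : set 'rV[R]_n, [/\ open N, N `<=` V,
     (exists delta : R, 0 < delta /\
        wp_tending_to_one P (fun T => [set w |
          (ereal_inf [set (crit_fT g e T w phi (H T w))%:E | phi in V `\` N]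
           >= ereal_inf [set (crit_fT g e T w phi (H T w))%:E | phi in N]
              + delta%:E)%E]))
   & (forall eps : R, 0 < eps -> exists eta : R, 0 < eta /\
        wp_tending_to_one P (fun T => [set w |
          (ereal_inf [set (crit_fT g e T w phi (H T w))%:E
                     | phi in [set phi | N phi /\
                                 (eps <= Num.norm (phi - est w T (H T w)))%R ]]
           >= (crit_fT g e T w (est w T (H T w)) (H T w) + eta)%:E)%E]))]) ->
  (* (A2) *)
  cvg_in_prob0 P (fun T w =>
     ereal_sup [set (Num.norm (crit_fT g e T w phi (H T w)
                      - crit_fT g e T w phi (patch_removal T kappa (H T w))))%:E
               | phi in V]) ->
  (* additional hypothesis: phihat_T(H_T) ->p phi0 *)
  cvg_in_prob P (fun T w => est w T (H T w)) phi0 ->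
  (* conclusion: (K^kappa phihat_T)(H_T) = phihat_T(S^kappa H_T) ->p phi0 *)
  cvg_in_prob P (fun T w => est w T (patch_removal T kappa (H T w))) phi0.
Proof.
move=> _ Hsub estP [N [_ NV [delta [delta0 gapVN]] gapN]] gapA2 cvgH eps eps0.
have eps20 : 0 < eps / 2 by rewrite divr_gt0.
have [eta [eta0 gapNeta]] := gapN _ eps20.
pose c := Num.min eta delta / 2.
have c0 : 0 < c by rewrite divr_gt0 // lt_min eta0 delta0.
have cc_eta : c + c <= eta by rewrite -splitr ge_min lexx.
have cc_delta : c + c <= delta by rewrite -splitr ge_min lexx orbT.
apply: (prob_vanishingS _ (prob_vanishingU (prob_vanishingU (cvgH _ eps20) gapVN)
                                           (prob_vanishingU gapNeta (gapA2 _ c0)))).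
move=> T w /= far; apply: contrapT; rewrite !not_orP.
move=> -[[/negP nearH /contrapT gapVN_w] [/contrapT gapN_w /ereal_sup_image_lt close]].
have [VH minH] := estP T w _ (Hsub T w).
have [VS minS] := estP T w (patch_removal T kappa (H T w))
  (subset_trans (@patch_removal_subset _ _ _) (Hsub T w)).
have almost_min := argmin_perturbation VH VS minS close.
have closeSH := well_separated_argmin NV minH gapVN_w gapN_w VS
  (lt_le_trans almost_min (lerD (lexx _) cc_delta))
  (lt_le_trans almost_min (lerD (lexx _) cc_eta)).
move: far; apply/negP; rewrite -ltNge (splitr eps).
by apply: le_lt_trans (ler_distD (est w T (H T w)) _ _) (ltrD closeSH _); rewrite ltNge.
Qed.
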